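(* Let $q\in\mathbb{C}$ with $|q|<1$, $r\in\mathbb{N}$, $n\in\mathbb{Z}_{+}=\{0,1,2,\dots\}$, $x$ real with $x\neq0,-1,-2,\dots$, and let $\chi$ be a Dirichlet character with conductor $f\in\mathbb{N}$, $f$ odd. Then $$E_{n,\chi,q}^{(r)}(x)=[f]_q^n\left(\frac{[2]_q}{[2]_{q^f}}\right)^r\sum_{a_1,\dots,a_r=0}^{f-1}\left(\prod_{j=1}^r\chi(a_j)\right)(-1)^{\sum_{j=1}^r a_j}E_{n,q^f}^{(r)}\!\left(\frac{x+\sum_{j=1}^r a_j}{f}\right),$$ and $$E_{n,\chi,q}^{(r)}(x)=\frac{[2]_q^r}{(1-q)^n}\sum_{l=0}^{n}\binom{n}{l}(-q^x)^l\sum_{a_1,\dots,a_r=0}^{f-1}\frac{\left(\prod_{j=1}^r\chi(a_j)\right)(-q^l)^{\sum_{i=1}^r a_i}}{(1+q^{lf})^r}.$$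
   Context: For a complex number $q$ with $|q|<1$ and $x$ real, $[x]_q=\frac{1-q^x}{1-q}$ (so $[2]_q=1+q$). For $r\in\mathbb{N}$, the $q$-Euler polynomials of order $r$ are defined by $$[2]_q^r\sum_{m_1,\dots,m_r=0}^{\infty}(-1)^{m_1+\cdots+m_r}e^{[m_1+\cdots+m_r+x]_q t}=\sum_{n=0}^{\infty}E_{n,q}^{(r)}(x)\frac{t^n}{n!},$$ with $E_{n,q^f}^{(r)}$ the same with $q$ replaced by $q^f$. The generalized $q$-Euler polynomials of order $r$ attached to $\chi$ are defined by $$[2]_q^r\sum_{m_1,\dots,m_r=0}^{\infty}(-1)^{m_1+\cdots+m_r}\left(\prod_{j=1}^r\chi(m_j)\right)e^{[x+m_1+\cdots+m_r]_q t}=\sum_{n=0}^{\infty}E_{n,\chi,q}^{(r)}(x)\frac{t^n}{n!}.$$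
   Formalization: Both $E_{n,\chi,q}^{(r)}(x)$ and $E_{n,q}^{(r)}(x)$ are Abel sums, the limits as s→1⁻ of $[2]_q^r\sum(-s)^{m_1+\cdots+m_r}\left(\prod_{j=1}^r\chi(m_j)\right)[x+m_1+\cdots+m_r]_q^n$ (χ=1 for the latter), in place of the n-th coefficients of the generating series. The statement above fails without it. *)

From Stdlib Require Import Reals ClassicalEpsilon Arith.
From Coquelicot Require Import Coquelicot.
Open Scope R_scope.

Definition cexp (z : C) : C :=
  (exp (Re z) * cos (Im z), exp (Re z) * sin (Im z)).

(** A complex q with |q| < 1 is given together with a chosen logarithm L
    (q = cexp L, Re L < 0); real powers are q^y := cexp (y L), and q^f has
    logarithm f L. *)
Definition qpow (L : C) (y : R) : C := cexp (Cmult (RtoC y) L).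

Definition qint (L : C) (y : R) : C :=
  Cdiv (Cminus (RtoC 1) (qpow L y)) (Cminus (RtoC 1) (cexp L)).

(** Value of a convergent complex series (junk if it diverges). *)
Definition csum (a : nat -> C) : C :=
  epsilon (inhabits (RtoC 0)) (fun v => @is_series C_AbsRing C_NormedModule a v).

(** Left limit at 1 of a complex function of a real variable (junk if none). *)
Definition lim_left1 (g : R -> C) : C :=
  epsilon (inhabits (RtoC 0)) (fun v => filterlim g (at_left 1) (locally v)).

(** Iterated multiple series with Abel factor s:
    msum chi s r g y = sum_{m_1,...,m_r >= 0} (-s)^(m_1+..+m_r)
                        (prod_j chi m_j) g (y + m_1 + ... + m_r). *)
Fixpoint msum (chi : nat -> C) (s : R) (r : nat) (g : R -> C) (y : R) : C :=
  match r with
  | O => g y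
  | S r' => csum (fun m => Cmult (RtoC ((- s) ^ m))
                     (Cmult (chi m) (msum chi s r' g (y + INR m))))
  end.

(** Generalized q-Euler polynomials of order r attached to chi: the n-th
    coefficient of the generating function, i.e.
    [2]_q^r sum_{m_1..m_r} (-1)^{sum m} (prod chi m_j) [x + sum m]_q^n,
    the (divergent) alternating multiple series being Abel-summed. *)
Definition qEulerChi (L : C) (r : nat) (chi : nat -> C) (n : nat) (x : R) : C :=
  Cmult (Cpow (qint L 2) r)
        (lim_left1 (fun s => msum chi s r (fun y => Cpow (qint L y) n) x)).

Definition qEuler (L : C) (r : nat) (n : nat) (x : R) : C :=
  qEulerChi L r (fun _ => RtoC 1) n x.

Definition fsum (N : nat) (a : nat -> C) : C :=
  List.fold_right Cplus (RtoC 0) (List.map a (List.seq 0 N)).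

Fixpoint fmsum (chi : nat -> C) (f : nat) (r : nat) (F : nat -> C) : C :=
  match r with
  | O => F O
  | S r' => fsum f (fun a => Cmult (chi a) (fmsum chi f r' (fun t => F (t + a)%nat)))
  end.

Definition dirichlet_char (f : nat) (chi : nat -> C) : Prop :=
  (0 < f)%nat /\
  (forall m, chi (m + f)%nat = chi m) /\
  (forall m k, chi (m * k)%nat = Cmult (chi m) (chi k)) /\
  chi 1%nat = RtoC 1 /\
  (forall m, chi m <> RtoC 0 <-> Nat.gcd m f = 1%nat).

(** chi has conductor f: a Dirichlet character mod f that is primitive,
    i.e. not induced by a character mod any proper divisor d of f. *)
Definition has_conductor (f : nat) (chi : nat -> C) : Prop :=
  dirichlet_char f chi /\
  forall d, Nat.divide d f -> (d < f)%nat ->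
    exists a b, Nat.gcd a f = 1%nat /\ Nat.gcd b f = 1%nat /\
      a mod d = b mod d /\ chi a <> chi b.

(* Expanding [y]_q^n = (1-q)^(-n) sum_l C(n,l) (-q^y)^l turns the summand into a
   combination of exponentials in y, for which the r-fold alternating series splits into
   r copies of sum_m chi(m) u^m with u = -s q^l, where s is the Abel parameter.
   Periodicity of chi sums this to sum_(a<f) chi(a) u^a / (1 - u^f); as f is odd, the
   denominator at s = 1 is 1 + q^(lf) <> 0, so the Abel limit is obtained by putting
   s = 1.  This closed form gives the second identity directly, and the first one by
   applying it also to the q^f-Euler polynomials (chi = 1, period 1) and comparing
   term by term. *)

From Stdlib Require Import Reals Lia Lra ClassicalEpsilon FunctionalExtensionality.
From Coquelicot Require Import Coquelicot.
Open Scope R_scope.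

Lemma fsum_S N a : fsum (S N) a = (fsum N a + a N)%C.
Proof.
  unfold fsum. rewrite List.seq_S, List.map_app, List.fold_right_app; simpl.
  induction (List.map a (List.seq 0 N)) as [|b l IH]; simpl.
  - ring.
  - rewrite IH. ring.
Qed.

Lemma fsum_Sl N a : fsum (S N) a = (a O + fsum N (fun k => a (S k)))%C.
Proof.
  induction N as [|N IH].
  - unfold fsum; simpl. ring.
  - rewrite fsum_S, IH, fsum_S. ring.
Qed.

Lemma fsum_ext N a b : (forall k, (k < N)%nat -> a k = b k) -> fsum N a = fsum N b.
Proof. induction N; intros H; auto. rewrite !fsum_S, IHN, H; auto. Qed.

Lemma fsum_mul_l N a c : (c * fsum N a)%C = fsum N (fun k => c * a k)%C.
Proof. induction N; [unfold fsum; simpl; ring|]. rewrite !fsum_S, <- IHN. ring. Qed.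

Lemma fsum_add N a b : (fsum N a + fsum N b)%C = fsum N (fun k => a k + b k)%C.
Proof. induction N; [unfold fsum; simpl; ring|]. rewrite !fsum_S, <- IHN. ring. Qed.

Lemma fmsum_ext chi f r F G : (forall t, F t = G t) -> fmsum chi f r F = fmsum chi f r G.
Proof. intros H. f_equal. now apply functional_extensionality. Qed.

Lemma fmsum_add chi f r F G :
  fmsum chi f r (fun t => F t + G t)%C = (fmsum chi f r F + fmsum chi f r G)%C.
Proof.
  revert F G; induction r as [|r IH]; intros F G; simpl; auto.
  rewrite fsum_add. apply fsum_ext; intros a _. rewrite IH. ring.
Qed.

Lemma fmsum_geom chi f r c u :
  fmsum chi f r (fun t => c * u ^ t)%C = (c * fsum f (fun a => chi a * u ^ a) ^ r)%C.
Proof.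
  revert c; induction r as [|r IH]; intros c; simpl.
  - ring.
  - match goal with |- _ = (c * (?A * ?B))%C => transitivity (c * B * A)%C; [|ring] end.
    rewrite fsum_mul_l.
    apply fsum_ext; intros a _.
    rewrite (fmsum_ext chi f r _ (fun t => c * u ^ a * u ^ t)%C)
      by (intros t; rewrite Cpow_add_r; ring).
    rewrite IH. ring.
Qed.

Lemma fmsum_zero chi f r : fmsum chi f r (fun _ => 0%C) = 0%C.
Proof.
  rewrite (fmsum_ext chi f r _ (fun t => 0 * 1 ^ t)%C) by (intros; ring).
  rewrite fmsum_geom. ring.
Qed.

Lemma fmsum_fsum chi f r N F :
  fmsum chi f r (fun t => fsum N (fun l => F l t)) = fsum N (fun l => fmsum chi f r (F l)).
Proof.
  induction N as [|N IH]; [apply fmsum_zero|].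
  rewrite fsum_S, <- IH, <- fmsum_add. apply fmsum_ext; intros t; now rewrite fsum_S.
Qed.

Lemma fmsum_fsum_geom chi f r N (c u : nat -> C) :
  fmsum chi f r (fun t => fsum N (fun l => c l * u l ^ t))%C =
  fsum N (fun l => c l * fsum f (fun a => chi a * u l ^ a) ^ r)%C.
Proof.
  rewrite fmsum_fsum. apply fsum_ext; intros l _. apply fmsum_geom.
Qed.

Lemma binomial_C_ends m : Binomial.C m 0 = 1 /\ Binomial.C m m = 1.
Proof.
  unfold Binomial.C; rewrite Nat.sub_0_r, Nat.sub_diag; simpl.
  split; field; apply INR_fact_neq_0.
Qed.

Lemma Cbinomial n u :
  ((1 + u) ^ n)%C = fsum (S n) (fun l => Binomial.C n l * u ^ l)%C.
Proof.
  induction n as [|n IH].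
  - unfold fsum; simpl. destruct (binomial_C_ends 0) as [-> _]. ring.
  - rewrite Cpow_S, IH, Cmult_plus_distr_r, Cmult_1_l, fsum_mul_l.
    rewrite (fsum_Sl n (fun l => Binomial.C n l * u ^ l)%C),
      (fsum_S n (fun k => u * (Binomial.C n k * u ^ k))%C), (fsum_Sl (S n)), fsum_S.
    rewrite <- (fsum_ext n (fun l => Binomial.C n (S l) * u ^ (S l) + u * (Binomial.C n l * u ^ l))%C
                         (fun l => Binomial.C (S n) (S l) * u ^ (S l))%C)
      by (intros k Hk; rewrite <- pascal, RtoC_plus by lia; rewrite Cpow_S; ring).
    rewrite <- fsum_add.
    destruct (binomial_C_ends n) as [-> ->]; destruct (binomial_C_ends (S n)) as [-> ->].
    rewrite Cpow_S. ring.
Qed.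

Lemma Cpow_opp_odd (z : C) k : Nat.Odd k -> ((- z) ^ k)%C = (- z ^ k)%C.
Proof.
  intros [j ->]. rewrite Nat.add_1_r, !Cpow_S, !Cpow_mult_r.
  replace ((- z) ^ 2)%C with (z ^ 2)%C by ring. ring.
Qed.

Lemma cexp_add a b : cexp (a + b) = (cexp a * cexp b)%C.
Proof.
  destruct a as [a1 a2], b as [b1 b2]. unfold cexp; simpl.
  rewrite exp_plus, cos_plus, sin_plus.
  apply injective_projections; simpl; ring.
Qed.

Lemma cexp_mul_INR k z : cexp (INR k * z) = (cexp z ^ k)%C.
Proof.
  induction k as [|k IH].
  - unfold cexp; simpl.
    replace (0 * fst z - 0 * snd z) with 0 by ring. replace (0 * snd z + 0 * fst z) with 0 by ring.
    rewrite exp_0, cos_0, sin_0. apply injective_projections; simpl; ring.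
  - rewrite S_INR, RtoC_plus, Cmult_plus_distr_r, Cmult_1_l, cexp_add, IH. simpl; ring.
Qed.

Lemma Cmod_cexp z : Cmod (cexp z) = exp (Re z).
Proof.
  unfold cexp, Cmod; simpl.
  replace (_ * _ + _ * _) with (Rsqr (exp (Re z)) * (Rsqr (sin (Im z)) + Rsqr (cos (Im z))))
    by (unfold Rsqr; ring).
  rewrite sin2_cos2, Rmult_1_r, sqrt_Rsqr; [reflexivity | left; apply exp_pos].
Qed.

Lemma Cmod_cexp_lt_1 L : Re L < 0 -> Cmod (cexp L) < 1.
Proof. intros HL. rewrite Cmod_cexp, <- exp_0. now apply exp_increasing. Qed.

Lemma qpow_plus_INR L y m : qpow L (y + INR m) = (qpow L y * cexp L ^ m)%C.
Proof. unfold qpow. now rewrite RtoC_plus, Cmult_plus_distr_r, cexp_add, cexp_mul_INR. Qed.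

Lemma qpow_scale L f y : (0 < f)%nat -> qpow (INR f * L) (y / INR f) = qpow L y.
Proof.
  intros Hf. unfold qpow. rewrite Cmult_assoc, <- RtoC_mult. do 3 f_equal.
  field. apply not_0_INR. lia.
Qed.

Lemma Cmod_pow_lt_1 z k : Cmod z < 1 -> (0 < k)%nat -> Cmod (z ^ k) < 1.
Proof. intros Hz Hk. rewrite Cmod_pow. apply pow_lt_1_compat; auto. split; auto. apply Cmod_ge_0. Qed.

Lemma one_plus_neq_0 z : Cmod z < 1 -> (1 + z)%C <> 0%C.
Proof.
  intros Hz Hc. replace z with (- (1))%C in Hz by (rewrite <- (Cplus_0_r (- (1))), <- Hc; ring).
  rewrite Cmod_m1 in Hz. lra.
Qed.

Lemma one_plus_Cpow_neq_0 (q : C) k : Cmod q < 1 -> (1 + q ^ k)%C <> 0%C.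
Proof.
  intros Hq. destruct k as [|k].
  - intros Hc. apply (f_equal fst) in Hc. simpl in Hc. lra.
  - apply one_plus_neq_0, Cmod_pow_lt_1; [exact Hq | lia].
Qed.

Lemma one_minus_neq_0 z : Cmod z < 1 -> (1 - z)%C <> 0%C.
Proof.
  intros Hz Hc. replace z with (RtoC 1) in Hz by (rewrite <- (Cplus_0_r z), <- Hc; ring).
  rewrite Cmod_1 in Hz. lra.
Qed.

Lemma qint_INR L k : qint L (INR k) = ((1 - cexp L ^ k) / (1 - cexp L))%C.
Proof. unfold qint, qpow. now rewrite cexp_mul_INR. Qed.

Lemma qint_neq_0 L y : Re L < 0 -> 0 < y -> qint L y <> 0%C.
Proof.
  intros HL Hy Hc.
  assert (Hq : (1 - cexp L)%C <> 0%C) by now apply one_minus_neq_0, Cmod_cexp_lt_1.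
  apply (one_minus_neq_0 (qpow L y)).
  - unfold qpow. rewrite Cmod_cexp, re_scal_l, <- exp_0. apply exp_increasing. nra.
  - transitivity (qint L y * (1 - cexp L))%C; [unfold qint; field; exact Hq | rewrite Hc; ring].
Qed.

Notation is_Cseries := (@is_series C_AbsRing C_NormedModule).

Definition periodic (P : nat) (chi : nat -> C) : Prop := forall m, chi (m + P)%nat = chi m.

Lemma periodic_mod P chi : periodic P chi -> forall m, chi m = chi (m mod P).
Proof.
  intros Hper m. destruct P as [|P]; [now rewrite Nat.mod_0_r|].
  rewrite (Nat.div_mod_eq m (S P)) at 1. rewrite Nat.add_comm.
  induction (m / S P)%nat as [|k IH]; [now rewrite Nat.mul_0_r, Nat.add_0_r|].
  now rewrite Nat.mul_succ_r, Nat.add_assoc, Hper.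
Qed.

Lemma periodic_bounded P chi :
  (0 < P)%nat -> periodic P chi -> exists B, forall m, Cmod (chi m) <= B.
Proof.
  intros HP Hper.
  assert (Hfin : forall N, exists B, forall a, (a < N)%nat -> Cmod (chi a) <= B).
  { induction N as [|N [B HB]]; [exists 0; intros; lia|].
    exists (Rmax B (Cmod (chi N))). intros a Ha.
    destruct (Nat.eq_dec a N) as [->|]; [apply Rmax_r|].
    apply Rle_trans with B; [apply HB; lia | apply Rmax_l]. }
  destruct (Hfin P) as [B HB]. exists B; intros m.
  rewrite (periodic_mod P chi Hper). apply HB, Nat.mod_upper_bound; lia.
Qed.

Lemma is_Cseries_unique a l1 l2 : is_Cseries a l1 -> is_Cseries a l2 -> l1 = l2.
Proof. apply (filterlim_locally_unique (F := eventually)). Qed.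

Lemma csum_unique a l : is_Cseries a l -> csum a = l.
Proof.
  intros H. apply (is_Cseries_unique a); [|exact H].
  exact (epsilon_spec (inhabits (RtoC 0)) (is_Cseries a) (ex_intro _ l H)).
Qed.

Lemma sum_n_fsum (a : nat -> C) N : @sum_n C_AbelianMonoid a N = fsum (S N) a.
Proof.
  induction N as [|N IH].
  - rewrite sum_O. unfold fsum; simpl. now rewrite Cplus_0_r.
  - now rewrite sum_Sn, IH, (fsum_S (S N)).
Qed.

Lemma is_Cseries_fsum N (F : nat -> nat -> C) (v : nat -> C) :
  (forall l, (l < N)%nat -> is_Cseries (F l) (v l)) ->
  is_Cseries (fun m => fsum N (fun l => F l m)) (fsum N v).
Proof.
  induction N as [|N IH]; intros H.
  - apply (filterlim_ext (fun _ => RtoC 0)); [|apply filterlim_const].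
    intros m. change (RtoC 0 = @sum_n C_AbelianMonoid (fun _ => RtoC 0) m).
    rewrite sum_n_fsum. induction (S m) as [|k IHk]; [reflexivity|].
    rewrite fsum_S, <- IHk. ring.
  - rewrite fsum_S. apply (is_series_ext (fun m => fsum N (fun l => F l m) + F N m)%C).
    + intros m. now rewrite fsum_S.
    + apply (@is_series_plus C_AbsRing C_NormedModule); [apply IH; auto | apply H; lia].
Qed.

Definition periodic_geom (chi : nat -> C) (P : nat) (u : C) : C :=
  (fsum P (fun a => chi a * u ^ a) / (1 - u ^ P))%C.

(* The tail of the series from index P is u^P times the whole series. *)
Lemma is_Cseries_periodic_geom chi P u :
  (0 < P)%nat -> periodic P chi -> Cmod u < 1 ->
  is_Cseries (fun m => chi m * u ^ m)%C (periodic_geom chi P u).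
Proof.
  intros HP Hper Hu.
  set (a := fun m => (chi m * u ^ m)%C).
  set (A := fsum P (fun k => chi k * u ^ k)%C).
  destruct (periodic_bounded P chi HP Hper) as [B HB].
  assert (Hex : @ex_series C_AbsRing C_NormedModule a).
  { apply (ex_series_le a (fun m => B * Cmod u ^ m)).
    - intros m. change (Cmod (a m) <= B * Cmod u ^ m). unfold a.
      rewrite Cmod_mult, Cmod_pow. apply Rmult_le_compat_r; [apply pow_le, Cmod_ge_0 | apply HB].
    - exists (B * / (1 - Cmod u)).
      apply (@is_series_scal R_AbsRing R_NormedModule), is_series_geom.
      rewrite Rabs_pos_eq; [exact Hu | apply Cmod_ge_0]. }
  destruct Hex as [S HS]. change C in S.
  assert (Htail : is_Cseries (fun k => a (P + k)%nat) (S - A)%C).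
  { apply is_series_incr_n; [exact HP|].
    replace (plus (S - A)%C _) with S; [exact HS|].
    change (@eq C S (S - A + @sum_n C_AbelianMonoid a (pred P))%C).
    rewrite sum_n_fsum, Nat.succ_pred_pos by exact HP. unfold a, A. ring. }
  assert (Hscal : is_Cseries (fun k => a (P + k)%nat) (u ^ P * S)%C).
  { apply (is_series_ext (fun k => u ^ P * a k)%C).
    - intros k. change (@eq C (u ^ P * a k)%C (a (P + k)%nat)). unfold a.
      rewrite Nat.add_comm, Hper, Cpow_add_r. ring.
    - exact (@is_series_scal C_AbsRing C_NormedModule _ _ _ HS). }
  assert (HSA : (S - A = u ^ P * S)%C) by exact (is_Cseries_unique _ _ _ Htail Hscal).
  replace (periodic_geom chi P u) with S; [exact HS|].
  unfold periodic_geom. fold A. replace A with (S * (1 - u ^ P))%C.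
  - field. apply one_minus_neq_0, Cmod_pow_lt_1; auto.
  - transitivity (S - (S - A))%C; [rewrite HSA | ]; ring.
Qed.

(* Coquelicot puts two uniform structures on C: the product one of [C_UniformSpace]
   and the one of the absolute ring [C_AbsRing]. Both have the Cmod-balls as a
   neighbourhood base, so their neighbourhood filters coincide. *)
Lemma locally_C_le_abs (z : C) :
  filter_le (@locally C_UniformSpace z) (@locally (AbsRing_UniformSpace C_AbsRing) z).
Proof. intros P HP. now apply (@locally_le_locally_norm C_AbsRing C_NormedModule). Qed.

Lemma locally_abs_le_C (z : C) :
  filter_le (@locally (AbsRing_UniformSpace C_AbsRing) z) (@locally C_UniformSpace z).
Proof. intros P HP. now apply (@locally_norm_le_locally C_AbsRing C_NormedModule). Qed.

Lemma continuous_Cmult {U : UniformSpace} (f g : U -> C) x :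
  continuous f x -> continuous g x -> continuous (fun y => f y * g y)%C x.
Proof.
  intros Hf Hg. apply (filterlim_filter_le_2 _ (locally_abs_le_C _)).
  apply (@continuous_mult U C_AbsRing); apply (filterlim_filter_le_2 _ (locally_C_le_abs _)); assumption.
Qed.

Lemma continuous_Cplus {U : UniformSpace} (f g : U -> C) x :
  continuous f x -> continuous g x -> continuous (fun y => f y + g y)%C x.
Proof. exact (@continuous_plus U C_AbsRing C_NormedModule f g x). Qed.

Lemma continuous_Cpow {U : UniformSpace} (f : U -> C) n x :
  continuous f x -> continuous (fun y => f y ^ n)%C x.
Proof.
  intros Hf. induction n as [|n IH]; [apply continuous_const|].
  now apply continuous_Cmult.
Qed.

Lemma continuous_fsum {U : UniformSpace} N (F : nat -> U -> C) x :
  (forall l, continuous (F l) x) -> continuous (fun y => fsum N (fun l => F l y)) x.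
Proof.
  intros H. induction N as [|N IH]; [apply continuous_const|].
  apply (continuous_ext (fun y => fsum N (fun l => F l y) + F N y)%C).
  - intros y. now rewrite fsum_S.
  - now apply continuous_Cplus.
Qed.

Lemma continuous_RtoC x : continuous RtoC x.
Proof.
  apply (filterlim_locally_ball_norm (K := C_AbsRing) (U := C_NormedModule)). intros eps.
  exists eps. intros y Hy. change (Rabs (y - x) < eps) in Hy.
  change (Cmod (RtoC y - RtoC x) < eps). now rewrite <- RtoC_minus, Cmod_R.
Qed.

Lemma Cmod_Cinv_sub (z y : C) :
  z <> 0%C -> Cmod (y - z) < Cmod z / 2 -> Cmod (/ y - / z) <= 2 * Cmod (y - z) / Cmod z ^ 2.
Proof.
  intros Hz Hyz.
  assert (Ha : 0 < Cmod z) by (apply Cmod_gt_0; exact Hz).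
  assert (Hy : Cmod z / 2 < Cmod y).
  { pose proof (Cmod_triangle y (z - y)) as T.
    replace (y + (z - y))%C with z in T by ring.
    rewrite <- Cmod_opp in Hyz. replace (- (y - z))%C with (z - y)%C in Hyz by ring. lra. }
  assert (Hy0 : y <> 0%C) by (apply Cmod_gt_0; lra).
  replace (/ y - / z)%C with ((z - y) * / y * / z)%C by (field; auto).
  rewrite !Cmod_mult, !Cmod_inv by auto.
  rewrite <- Cmod_opp. replace (- (z - y))%C with (y - z)%C by ring.
  apply Rle_trans with (Cmod (y - z) * / (Cmod z / 2) * / Cmod z).
  - apply Rmult_le_compat_r; [left; apply Rinv_0_lt_compat, Ha|].
    apply Rmult_le_compat_l; [apply Cmod_ge_0|].
    apply Rinv_le_contravar; lra.
  - right. field. lra.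
Qed.

Lemma continuous_Cinv (z : C) : z <> 0%C -> continuous Cinv z.
Proof.
  intros Hz. assert (Ha : 0 < Cmod z) by (apply Cmod_gt_0; exact Hz).
  apply (filterlim_locally_ball_norm (K := C_AbsRing) (U := C_NormedModule)). intros eps.
  refine (@locally_le_locally_norm C_AbsRing C_NormedModule z _ _).
  assert (Hd : 0 < Rmin (Cmod z / 2) (eps * Cmod z ^ 2 / 4)).
  { apply Rmin_pos; [lra|]. pose proof (cond_pos eps). pose proof (pow_lt _ 2 Ha). nra. }
  exists (mkposreal _ Hd). intros y Hy.
  change (Cmod (y - z) < Rmin (Cmod z / 2) (eps * Cmod z ^ 2 / 4)) in Hy.
  change (Cmod (/ y - / z) < eps).
  pose proof (Rmin_l (Cmod z / 2) (eps * Cmod z ^ 2 / 4)).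
  pose proof (Rmin_r (Cmod z / 2) (eps * Cmod z ^ 2 / 4)).
  eapply Rle_lt_trans; [apply Cmod_Cinv_sub; auto; lra|].
  pose proof (pow_lt _ 2 Ha). pose proof (cond_pos eps).
  apply Rmult_lt_reg_r with (Cmod z ^ 2); auto. unfold Rdiv. rewrite Rmult_assoc, Rinv_l by lra. nra.
Qed.

Lemma continuous_periodic_geom chi P u : (1 - u ^ P)%C <> 0%C -> continuous (periodic_geom chi P) u.
Proof.
  intros Hu. unfold periodic_geom, Cdiv.
  apply continuous_Cmult.
  - apply continuous_fsum; intros a.
    apply continuous_Cmult; [apply continuous_const | apply continuous_Cpow, continuous_id].
  - apply (continuous_comp (fun v => 1 - v ^ P)%C Cinv); [|now apply continuous_Cinv].
    apply (@continuous_minus _ C_AbsRing C_NormedModule); [apply continuous_const|].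
    apply continuous_Cpow, continuous_id.
Qed.

Lemma lim_left1_unique g v : filterlim g (at_left 1) (locally v) -> lim_left1 g = v.
Proof.
  intros H. unfold lim_left1.
  apply (@filterlim_locally_unique R C_AbsRing C_NormedModule (at_left 1)
           (Proper_StrongProper _ (at_left_proper_filter 1)) g); [|exact H].
  exact (epsilon_spec (inhabits (RtoC 0)) (fun v => filterlim g (at_left 1) (locally v))
           (ex_intro _ v H)).
Qed.

Lemma qint_pow_expand L n y :
  (qint L y ^ n)%C =
  fsum (S n) (fun l => (/ (1 - cexp L)) ^ n * Binomial.C n l * (- qpow L y) ^ l)%C.
Proof.
  unfold qint, Cdiv. rewrite Cpow_mult_l.
  replace (1 - qpow L y)%C with (1 + - qpow L y)%C by ring.
  rewrite Cbinomial, Cmult_comm, fsum_mul_l.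
  apply fsum_ext; intros; ring.
Qed.

(* As s < 1, all series converge absolutely, so the finite sum over l can be pulled
   through each of the r summations. *)
Lemma msum_exp_poly chi P s (E : R -> C) (w : C) (r N : nat) (K : nat -> C) (y : R) :
  (0 < P)%nat -> periodic P chi -> 0 <= s < 1 -> Cmod w <= 1 ->
  (forall y m, E (y + INR m) = (E y * w ^ m)%C) ->
  msum chi s r (fun y => fsum N (fun l => K l * E y ^ l))%C y =
  fsum N (fun l => K l * E y ^ l * periodic_geom chi P (RtoC (- s) * w ^ l) ^ r)%C.
Proof.
  intros HP Hper Hs Hw HE. revert y; induction r as [|r IH]; intros y; simpl.
  - apply fsum_ext; intros; ring.
  - apply csum_unique.
    set (G := fun l => periodic_geom chi P (RtoC (- s) * w ^ l)).
    apply (is_series_ext (fun m => fsum N (fun l =>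
             K l * E y ^ l * G l ^ r * (chi m * (RtoC (- s) * w ^ l) ^ m)))%C).
    { intros m. rewrite IH, fsum_mul_l, fsum_mul_l. apply fsum_ext; intros l _.
      rewrite HE, !Cpow_mult_l, <- !Cpow_mult_r, (Nat.mul_comm m l), RtoC_pow.
      unfold G. ring. }
    apply is_Cseries_fsum; intros l _. fold (G l).
    replace (K l * E y ^ l * (G l * G l ^ r))%C with (K l * E y ^ l * G l ^ r * G l)%C by ring.
    apply (@is_series_scal C_AbsRing C_NormedModule), is_Cseries_periodic_geom; auto.
    rewrite Cmod_mult, Cmod_pow, Cmod_R, Rabs_Ropp, Rabs_pos_eq by lra.
    apply Rle_lt_trans with (s * 1); [|lra].
    apply Rmult_le_compat_l; [lra|].
    rewrite <- (pow1 l). apply pow_incr. split; [apply Cmod_ge_0 | exact Hw].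
Qed.

Lemma msum_qint_pow L chi P s r n x :
  Re L < 0 -> (0 < P)%nat -> periodic P chi -> 0 <= s < 1 ->
  msum chi s r (fun y => qint L y ^ n)%C x =
  fsum (S n) (fun l => (/ (1 - cexp L)) ^ n * Binomial.C n l * (- qpow L x) ^ l *
                       periodic_geom chi P (RtoC (- s) * cexp L ^ l) ^ r)%C.
Proof.
  intros HL HP Hper Hs.
  rewrite (functional_extensionality _ _ (qint_pow_expand L n)).
  apply msum_exp_poly; auto.
  - left. now apply Cmod_cexp_lt_1.
  - intros y m. rewrite qpow_plus_INR. ring.
Qed.

Lemma qEulerChi_closed L r chi f n x :
  Re L < 0 -> Nat.Odd f -> periodic f chi ->
  qEulerChi L r chi n x =
  (qint L 2 ^ r *
   fsum (S n) (fun l => (/ (1 - cexp L)) ^ n * Binomial.C n l * (- qpow L x) ^ l *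
     (fsum f (fun a => chi a * (- cexp L ^ l) ^ a) / (1 + cexp L ^ (l * f))) ^ r))%C.
Proof.
  intros HL Hodd Hper.
  assert (Hf : (0 < f)%nat) by (destruct Hodd; lia).
  pose proof (Cmod_cexp_lt_1 L HL) as Hq.
  set (H := fun s : R => fsum (S n) (fun l => (/ (1 - cexp L)) ^ n * Binomial.C n l *
              (- qpow L x) ^ l * periodic_geom chi f (RtoC (- s) * cexp L ^ l) ^ r)%C).
  assert (Hu : forall l, (RtoC (Ropp 1) * cexp L ^ l)%C = (- cexp L ^ l)%C)
    by (intros l; rewrite RtoC_opp; ring).
  assert (Hden : forall l, (1 - (- cexp L ^ l) ^ f)%C = (1 + cexp L ^ (l * f))%C)
    by (intros l; rewrite Cpow_opp_odd, Cpow_mult_r by exact Hodd; ring).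
  unfold qEulerChi. f_equal. apply lim_left1_unique.
  apply (filterlim_ext_loc H).
  { exists (mkposreal 1 Rlt_0_1). intros s Hs Hs1. change (Rabs (s - 1) < 1) in Hs.
    apply Rabs_def2 in Hs. symmetry. apply msum_qint_pow; auto. lra. }
  replace (fsum (S n) _) with (H 1)
    by (apply fsum_ext; intros l _; unfold periodic_geom; now rewrite Hu, Hden).
  apply (filterlim_filter_le_1 _ (filter_le_within _)).
  apply continuous_fsum; intros l.
  apply continuous_Cmult; [apply continuous_const|].
  apply continuous_Cpow.
  apply (continuous_comp (fun s : R => RtoC (- s) * cexp L ^ l)%C).
  - apply continuous_Cmult; [|apply continuous_const].
    apply (continuous_comp Ropp RtoC); [apply (continuous_opp (V := R_NormedModule)), continuous_id|].
    apply continuous_RtoC.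
  - apply continuous_periodic_geom. rewrite Hu, Hden.
    now apply one_plus_Cpow_neq_0.
Qed.

Lemma qEuler_closed L r n y :
  Re L < 0 ->
  qEuler L r n y =
  (qint L 2 ^ r *
   fsum (S n) (fun l => (/ (1 - cexp L)) ^ n * Binomial.C n l * (- qpow L y) ^ l *
                        (/ (1 + cexp L ^ l)) ^ r))%C.
Proof.
  intros HL. unfold qEuler.
  rewrite (qEulerChi_closed L r _ 1); [| exact HL | exists 0%nat; reflexivity | intros m; reflexivity].
  f_equal. apply fsum_ext; intros l _.
  unfold fsum, Cdiv; simpl. rewrite Nat.mul_1_r, Cmult_1_l, Cplus_0_r, Cmult_1_l.
  reflexivity.
Qed.

Lemma qEuler_shifted_expand L f r n x t :
  Re L < 0 -> (0 < f)%nat ->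
  (RtoC ((-1) ^ t)%R * qEuler (INR f * L) r n ((x + INR t) / INR f))%C =
  fsum (S n) (fun l => qint (INR f * L) 2 ^ r * (/ (1 - cexp L ^ f)) ^ n * Binomial.C n l *
    (- qpow L x) ^ l * (/ (1 + cexp L ^ (l * f))) ^ r * (- cexp L ^ l) ^ t)%C.
Proof.
  intros HL Hf.
  assert (HLf : Re (INR f * L) < 0)
    by (rewrite re_scal_l; pose proof (lt_0_INR _ Hf); nra).
  rewrite qEuler_closed, cexp_mul_INR, qpow_scale, qpow_plus_INR by assumption.
  rewrite Cmult_assoc, fsum_mul_l. apply fsum_ext; intros l _.
  replace (- (qpow L x * cexp L ^ t))%C with (- qpow L x * cexp L ^ t)%C by ring.
  replace (- cexp L ^ l)%C with (RtoC (Ropp 1) * cexp L ^ l)%C by (rewrite RtoC_opp; ring).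
  replace ((-1) ^ t)%R with (Ropp 1 ^ t)%R by (f_equal; ring).
  rewrite RtoC_pow, !Cpow_mult_l, <- !Cpow_mult_r, (Nat.mul_comm t l), (Nat.mul_comm f l).
  ring.
Qed.

Lemma qEulerChi_explicit L r n f x chi :
  Re L < 0 -> Nat.Odd f -> periodic f chi ->
  qEulerChi L r chi n x =
  (qint L 2 ^ r / (1 - cexp L) ^ n *
   fsum (S n) (fun l => Binomial.C n l * ((- qpow L x) ^ l *
     fmsum chi f r (fun t => (- cexp L ^ l) ^ t / (1 + cexp L ^ (l * f)) ^ r))))%C.
Proof.
  intros HL Hodd Hper. pose proof (Cmod_cexp_lt_1 L HL) as Hq.
  assert (Hq1 : (1 - cexp L)%C <> 0%C) by now apply one_minus_neq_0.
  rewrite (qEulerChi_closed L r chi f) by assumption.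
  rewrite !fsum_mul_l. apply fsum_ext; intros l _.
  assert (HD := one_plus_Cpow_neq_0 _ (l * f) Hq).
  rewrite (fmsum_ext chi f r _ (fun t => / (1 + cexp L ^ (l * f)) ^ r * (- cexp L ^ l) ^ t)%C)
    by (intros t; unfold Cdiv; ring).
  rewrite fmsum_geom. unfold Cdiv. rewrite Cpow_mult_l, !Cpow_inv by assumption.
  ring.
Qed.

Lemma qEulerChi_distribution L r n f x chi :
  Re L < 0 -> Nat.Odd f -> periodic f chi ->
  qEulerChi L r chi n x =
  (qint L (INR f) ^ n * ((qint L 2 / qint (INR f * L) 2) ^ r *
   fmsum chi f r (fun t => RtoC ((-1) ^ t)%R * qEuler (INR f * L) r n ((x + INR t) / INR f))))%C.
Proof.
  intros HL Hodd Hper. pose proof (Cmod_cexp_lt_1 L HL) as Hq.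
  assert (Hf : (0 < f)%nat) by (destruct Hodd; lia).
  assert (Hq1 : (1 - cexp L)%C <> 0%C) by now apply one_minus_neq_0.
  assert (Hqf : (1 - cexp L ^ f)%C <> 0%C) by now apply one_minus_neq_0, Cmod_pow_lt_1.
  assert (H2f : qint (INR f * L) 2 <> 0%C).
  { apply qint_neq_0; [|lra]. rewrite re_scal_l. pose proof (lt_0_INR _ Hf). nra. }
  rewrite (qEulerChi_closed L r chi f) by assumption.
  rewrite (fmsum_ext chi f r _ _ (fun t => qEuler_shifted_expand L f r n x t HL Hf)).
  rewrite fmsum_fsum_geom, !fsum_mul_l. apply fsum_ext; intros l _.
  assert (HD := one_plus_Cpow_neq_0 _ (l * f) Hq).
  rewrite qint_INR. unfold Cdiv. rewrite !Cpow_mult_l, !Cpow_inv by assumption.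
  field. auto using Cpow_nz.
Qed.

Theorem theorem5 (L : C) (r n f : nat) (x : R) (chi : nat -> C) :
  Re L < 0 ->                                   (* |q| < 1, q = cexp L *)
  (1 <= r)%nat ->
  (forall k : nat, x <> - INR k) ->
  has_conductor f chi ->
  Nat.Odd f ->
  qEulerChi L r chi n x =
    Cmult (Cpow (qint L (INR f)) n)
     (Cmult (Cpow (Cdiv (qint L 2) (qint (Cmult (RtoC (INR f)) L) 2)) r)
       (fmsum chi f r (fun t =>
          Cmult (RtoC ((-1) ^ t))
                (qEuler (Cmult (RtoC (INR f)) L) r n ((x + INR t) / INR f)))))
  /\
  qEulerChi L r chi n x =
    Cmult (Cdiv (Cpow (qint L 2) r) (Cpow (Cminus (RtoC 1) (cexp L)) n))
     (fsum (S n) (fun l =>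
        Cmult (RtoC (Binomial.C n l))
         (Cmult (Cpow (Copp (qpow L x)) l)
           (fmsum chi f r (fun t =>
              Cdiv (Cpow (Copp (Cpow (cexp L) l)) t)
                   (Cpow (Cplus (RtoC 1) (Cpow (cexp L) (l * f))) r)))))).
Proof.
  intros HL _ _ [[_ [Hper _]] _] Hodd.
  split; [apply qEulerChi_distribution | apply qEulerChi_explicit]; assumption.
Qed.
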